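(* In the setting below, let $n,k\in\mathbb{Z}$ and $0<\alpha\le1$. Then $-n\lhd0\lhd k\lhd n$ over $I_\alpha$ if and only if $-n\lhd -k\lhd0\lhd n$ over $I_\alpha$. In particular, if $n$ is a closest return time with respect to $I_\alpha$, then so is $-n$.
   Context: $\mathbb{T}^1=\mathbb{R}/\mathbb{Z}$, $\omega\in[0,1)$ irrational, $T(\theta,x)=(\theta+\omega,T_\theta(x))$ a continuous map of $\mathbb{T}^2$, homotopic to the identity, with orientation-preserving homeomorphic fibre maps. Let $W=I\times K$ with $I,K\subset\mathbb{T}^1$ open intervals, $|I|<\tfrac12$, $I=(-|I|/2,|I|/2)$ centred at $0$, and $W$ wandering: $T^n(W)\cap W=\emptyset$ for all $n\in\mathbb{N}$. For $0<\alpha\le1$, $I_\alpha:=(-\alpha|I|/2,\alpha|I|/2)$. For $A\subseteq\mathbb{T}^2$, $A_\theta:=\{x:(\theta,x)\in A\}$. Integers $n_1,\dots,n_k$ are comparable over an interval $J$ if $J\subseteq\bigcap_{i=1}^k(I+n_i\omega)$. For $k\ge3$, ''$n_1\lhd\dots\lhd n_k$ over $J$'' means $n_1,\dots,n_k$ are comparable over $J$ and for all $\theta\in J$ and all $x_i\in(T^{n_i}W)_\theta$ the points $x_1,x_2,\dots,x_k$ lie in this cyclic (counterclockwise) order on the circle. $N(\alpha):=\{n\in\mathbb{Z}:n\text{ comparable over }I_\alpha\}=\{n:|n\omega\bmod1|\le\frac{1-\alpha}{2}|I|\}$. $n\in N(\alpha)$ is a closest return time (w.r.t. $I_\alpha$)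 if either ($-n\lhd0\lhd n$ over $I_\alpha$ and there is no $k\in N(\alpha)\setminus\{0\}$ with $|k|<|n|$ and $0\lhd k\lhd n$ over $I_\alpha$) or ($n\lhd0\lhd-n$ over $I_\alpha$ and there is no $k\in N(\alpha)\setminus\{0\}$ with $|k|<|n|$ and $n\lhd k\lhd0$ over $I_\alpha$). *)

From Stdlib Require Import Reals Lra Lia ZArith List Sorting.Sorted.
Open Scope R_scope.

(** The torus T^2 = R^2 / Z^2 is represented through lifts: points are pairs
    of reals, and all sets below are Z^2-periodic.  The skew product
    T(θ,x) = (θ+ω, T_θ x) is given by a lift F : R -> R -> R of its fibre maps. *)

Record setting := mkSetting {
  om   : R;
  F    : R -> R -> R;  (* lift of the fibre maps: T_θ(x mod 1) = F θ x mod 1 *)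
  lenI : R;            (* |I|, with I = (-|I|/2, |I|/2) *)
  cK   : R;            (* K = (cK, cK + lenK) mod 1 *)
  lenK : R
}.

Definition eqmod1 (x y : R) : Prop := exists z : Z, x - y = IZR z.

Definition Phi (S : setting) (p : R * R) : R * R :=
  (fst p + om S, F S (fst p) (snd p)).

Fixpoint iterPhi (S : setting) (n : nat) (p : R * R) : R * R :=
  match n with
  | O => p
  | Datatypes.S n' => Phi S (iterPhi S n' p)
  end.

Definition inI (S : setting) (θ : R) : Prop :=
  exists j : Z, - lenI S / 2 < θ - IZR j < lenI S / 2.

Definition inK (S : setting) (x : R) : Prop :=
  exists j : Z, cK S < x - IZR j < cK S + lenK S.

Definition inW (S : setting) (p : R * R) : Prop := inI S (fst p) /\ inK S (snd p).

(** q ∈ T^n(W), n ∈ Z (T is a homeomorphism; for n < 0 this is T^{-n} q ∈ W). *)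
Definition inTW (S : setting) (n : Z) (q : R * R) : Prop :=
  if (0 <=? n)%Z then exists p, inW S p /\ iterPhi S (Z.to_nat n) p = q
  else inW S (iterPhi S (Z.to_nat (- n)) q).

Definition standing (S : setting) : Prop :=
  (0 <= om S < 1) /\
  (forall p q : Z, q <> 0%Z -> om S * IZR q <> IZR p) /\
  (forall θ x eps, 0 < eps -> exists delta, 0 < delta /\
     forall θ' x', Rabs (θ' - θ) < delta -> Rabs (x' - x) < delta ->
       Rabs (F S θ' x' - F S θ x) < eps) /\
  (* T well defined on T^2 and homotopic to the identity *)
  (forall θ x, F S (θ + 1) x = F S θ x) /\
  (forall θ x, F S θ (x + 1) = F S θ x + 1) /\
  (forall θ x y, x < y -> F S θ x < F S θ y) /\
  (0 < lenI S < 1/2) /\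
  (0 < lenK S <= 1) /\
  (forall n : nat, (1 <= n)%nat -> forall q, inTW S (Z.of_nat n) q -> inW S q -> False).

Definition Ialpha (S : setting) (alpha : R) (θ : R) : Prop :=
  exists j : Z, Rabs (θ - IZR j) < alpha * lenI S / 2.

Definition comparable (S : setting) (ns : list Z) (J : R -> Prop) : Prop :=
  forall θ, J θ -> Forall (fun n => inI S (θ - IZR n * om S)) ns.

Definition cyc_order (xs : list R) : Prop :=
  exists ys : list R,
    Forall2 eqmod1 ys xs /\ Sorted Rlt ys /\
    match ys with
    | nil => True
    | y0 :: _ => last ys y0 < y0 + 1
    end.

Definition lhd (S : setting) (ns : list Z) (J : R -> Prop) : Prop :=
  (3 <= length ns)%nat /\ comparable S ns J /\
  forall θ xs, J θ -> Forall2 (fun n x => inTW S n (θ, x)) ns xs -> cyc_order xs.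

Definition inN (S : setting) (alpha : R) (n : Z) : Prop :=
  comparable S (n :: nil) (Ialpha S alpha).

Definition closest_return (S : setting) (alpha : R) (n : Z) : Prop :=
  let J := Ialpha S alpha in
  inN S alpha n /\
  ( (lhd S ((- n)%Z :: 0%Z :: n :: nil) J /\
      ~ (exists k : Z, inN S alpha k /\ k <> 0%Z /\ (Z.abs k < Z.abs n)%Z /\
                       lhd S (0%Z :: k :: n :: nil) J))
  \/ (lhd S (n :: 0%Z :: (- n)%Z :: nil) J /\
      ~ (exists k : Z, inN S alpha k /\ k <> 0%Z /\ (Z.abs k < Z.abs n)%Z /\
                       lhd S (n :: k :: 0%Z :: nil) J)) ).

From Stdlib Require Import Reals ZArith List Lra Lia Psatz Sorting.Sorted Ranalysis5.
Open Scope R_scope.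

(* The fibres over θ of the iterates T^a W are disjoint (W is wandering) and move
   continuously with θ, so the cyclic order of three of them is constant along any segment
   over which all three are defined; moreover T^j carries the order of a, b, c over θ to
   that of a+j, b+j, c+j over θ + jω.  Over I_α every relevant index is comparable with
   room to spare: the fractional parts e_n, e_k of nω, kω lie within |I|/2 - α|I|/2 of 0.
   From -n ◁ 0 ◁ k and 0 ◁ k ◁ n, move the second order to θ = (e_k + e_n)/2 and apply
   T^(-n) to get -n ◁ k-n ◁ 0 over θ - e_n; together with -n ◁ 0 ◁ k there this gives
   k-n ◁ 0 ◁ k, which moved to τ + e_k and pulled back by T^(-k) is -n ◁ -k ◁ 0 over an
   arbitrary τ of I_α.
   The converse is the mirror argument, and the statement on closest return times follows
   by applying the equivalence to the minimality condition. *)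

Lemma translate_by_Z (f : R -> R) (d : R) :
  (forall x, f (x + 1) = f x + d) -> forall x (m : Z), f (x + IZR m) = f x + IZR m * d.
Proof.
  intros Hf x m; induction m as [|m IH|m IH] using Z.peano_ind.
  - rewrite Rplus_0_r; ring.
  - rewrite succ_IZR, <- Rplus_assoc, Hf, IH; ring.
  - rewrite <- Z.sub_1_r, minus_IZR.
    replace (x + IZR m) with (x + (IZR m - 1) + 1) in IH by ring.
    rewrite Hf in IH; lra.
Qed.

Lemma continuity_pt_of_eps_delta (h : R -> R) t0 :
  (forall eps, 0 < eps -> exists d, 0 < d /\ forall t, Rabs (t - t0) < d -> Rabs (h t - h t0) < eps) ->
  continuity_pt h t0.
Proof.
  intros H eps Heps. destruct (H eps Heps) as [d [Hd H']].
  exists d; split; auto. intros t [_ Ht]. apply H', Ht.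
Qed.

Lemma degree_one_surjective (f : R -> R) :
  (forall x, continuity_pt f x) -> (forall x, f (x + 1) = f x + 1) ->
  forall y, exists x, f x = y.
Proof.
  intros Hc H1 y.
  assert (Hf : forall m : Z, f (0 + IZR m) = f 0 + IZR m)
    by (intros m; rewrite (translate_by_Z f 1 H1); ring).
  destruct (archimed (Rabs (y - f 0))) as [Hup _].
  set (N := up (Rabs (y - f 0))) in *.
  pose proof (Rle_abs (y - f 0)). pose proof (Rle_abs (- (y - f 0))).
  rewrite Rabs_Ropp in *.
  destruct (f_interv_is_interv f (0 + IZR (- N)) (0 + IZR N) y) as [x [_ E]].
  - rewrite opp_IZR. lra.
  - rewrite !Hf, opp_IZR. lra.
  - auto.
  - eauto.
Qed.

Lemma continuous_avoiding_Z_stays (h : R -> R) (m : Z) :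
  (forall t, 0 <= t <= 1 -> continuity_pt h t) ->
  (forall t, 0 <= t <= 1 -> forall q : Z, h t <> IZR q) ->
  IZR m < h 0 < IZR m + 1 -> IZR m < h 1 < IZR m + 1.
Proof.
  intros Hc Hq H0.
  split; apply Rnot_le_lt; intros H1.
  - destruct (f_interv_is_interv (fun s => - h s) 0 1 (- IZR m)) as [t [Ht E]];
      [lra|lra|intros; apply continuity_pt_opp; auto|].
    apply (Hq t Ht m); lra.
  - destruct (f_interv_is_interv h 0 1 (IZR (m + 1))) as [t [Ht E]];
      [lra|rewrite plus_IZR; lra|auto|].
    exact (Hq t Ht _ E).
Qed.

Definition jointly_continuous (g : R -> R -> R) : Prop :=
  forall t x eps, 0 < eps -> exists d, 0 < d /\
    forall t' x', Rabs (t' - t) < d -> Rabs (x' - x) < d -> Rabs (g t' x' - g t x) < eps.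

Lemma jointly_continuous_along_line g u0 du v0 dv t0 :
  jointly_continuous g -> continuity_pt (fun s => g (u0 + s * du) (v0 + s * dv)) t0.
Proof.
  intros Hg. apply continuity_pt_of_eps_delta. intros eps He.
  destruct (Hg (u0 + t0 * du) (v0 + t0 * dv) eps He) as [d [Hd H]].
  set (M := 1 + Rabs du + Rabs dv).
  assert (HM : 0 < M) by (unfold M; pose proof (Rabs_pos du); pose proof (Rabs_pos dv); lra).
  exists (d / M); split; [apply Rdiv_lt_0_compat; auto|].
  intros s Hs.
  assert (Hsd : Rabs (s - t0) * M < d).
  { apply (Rmult_lt_compat_r M) in Hs; auto.
    unfold Rdiv in Hs. rewrite Rmult_assoc, Rinv_l, Rmult_1_r in Hs; lra. }
  assert (Hlin : forall c a, Rabs c <= M -> Rabs (a + s * c - (a + t0 * c)) < d).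
  { intros c a Hc. replace (a + s * c - (a + t0 * c)) with ((s - t0) * c) by ring.
    rewrite Rabs_mult. pose proof (Rmult_le_compat_l _ _ _ (Rabs_pos (s - t0)) Hc). lra. }
  apply H; apply Hlin; unfold M; pose proof (Rabs_pos du); pose proof (Rabs_pos dv); lra.
Qed.

Definition fibre_iter (S : setting) (n : nat) (t x : R) : R := snd (iterPhi S n (t, x)).

Lemma iterPhi_fst S n p : fst (iterPhi S n p) = fst p + INR n * om S.
Proof. induction n; simpl; [ring|]. rewrite IHn. destruct n; simpl; ring. Qed.

Lemma iterPhi_eq S n t x : iterPhi S n (t, x) = (t + INR n * om S, fibre_iter S n t x).
Proof.
  unfold fibre_iter. pose proof (iterPhi_fst S n (t, x)) as E. simpl in E. rewrite <- E.
  destruct (iterPhi S n (t, x)); reflexivity.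
Qed.

Lemma iterPhi_add S m n p : iterPhi S (m + n) p = iterPhi S m (iterPhi S n p).
Proof. induction m; simpl; auto. rewrite IHm; auto. Qed.

Lemma fibre_iter_S S n t x :
  fibre_iter S (Datatypes.S n) t x = F S (t + INR n * om S) (fibre_iter S n t x).
Proof. unfold fibre_iter at 1. simpl. rewrite iterPhi_eq. reflexivity. Qed.

Lemma fibre_iter_add S m n t x :
  fibre_iter S (m + n) t x = fibre_iter S m (t + INR n * om S) (fibre_iter S n t x).
Proof. unfold fibre_iter at 1. rewrite iterPhi_add, iterPhi_eq. reflexivity. Qed.

Section Fibres.
Variable S : setting.
Hypothesis hS : standing S.

Lemma F_periodic t x : F S (t + 1) x = F S t x.
Proof. apply hS. Qed.

Lemma F_degree_one t x : F S t (x + 1) = F S t x + 1.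
Proof. apply hS. Qed.

Lemma F_increasing t x y : x < y -> F S t x < F S t y.
Proof. apply hS. Qed.

Lemma F_jointly_continuous : jointly_continuous (F S).
Proof. intros t x; apply hS. Qed.

Lemma fibre_iter_shift_x n t x (m : Z) :
  fibre_iter S n t (x + IZR m) = fibre_iter S n t x + IZR m.
Proof.
  induction n; [reflexivity|]. rewrite !fibre_iter_S, IHn.
  rewrite (translate_by_Z _ 1 (F_degree_one _)). ring.
Qed.

Lemma fibre_iter_shift_t n t x (m : Z) : fibre_iter S n (t + IZR m) x = fibre_iter S n t x.
Proof.
  induction n; [reflexivity|]. rewrite !fibre_iter_S, IHn.
  replace (t + IZR m + INR n * om S) with (t + INR n * om S + IZR m) by ring.
  rewrite (translate_by_Z (fun s => F S s _) 0); [ring|].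
  intros s. rewrite F_periodic. ring.
Qed.

Lemma fibre_iter_increasing n t x y : x < y -> fibre_iter S n t x < fibre_iter S n t y.
Proof. intros H; induction n; [exact H|]. rewrite !fibre_iter_S. apply F_increasing; auto. Qed.

Lemma fibre_iter_injective n t x y : fibre_iter S n t x = fibre_iter S n t y -> x = y.
Proof.
  intros H. destruct (Rtotal_order x y) as [h|[h|h]]; auto;
    apply (fibre_iter_increasing n t) in h; lra.
Qed.

Lemma fibre_iter_surjective n t y : exists x, fibre_iter S n t x = y.
Proof.
  revert y. induction n; intros y; [exists y; reflexivity|].
  assert (Hc : forall x, continuity_pt (F S (t + INR n * om S)) x).
  { intros x. apply (continuity_pt_locally_ext (fun s => F S (t + INR n * om S + s * 0) (0 + s * 1)) _ 1);
      [lra| intros; f_equal; ring|apply jointly_continuous_along_line, F_jointly_continuous]. }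
  destruct (degree_one_surjective _ Hc (F_degree_one _) y) as [z Hz].
  destruct (IHn z) as [x Hx]. exists x. rewrite fibre_iter_S, Hx; auto.
Qed.

Lemma fibre_iter_jointly_continuous n : jointly_continuous (fibre_iter S n).
Proof.
  induction n; intros t x eps He.
  - exists eps; split; auto.
  - destruct (F_jointly_continuous (t + INR n * om S) (fibre_iter S n t x) eps He) as [d1 [Hd1 H1]].
    destruct (IHn t x d1 Hd1) as [d2 [Hd2 H2]].
    exists (Rmin d1 d2); split; [apply Rmin_glb_lt; auto|].
    pose proof (Rmin_l d1 d2); pose proof (Rmin_r d1 d2).
    intros t' x' Ht Hx. rewrite !fibre_iter_S. apply H1.
    + replace (t' + INR n * om S - (t + INR n * om S)) with (t' - t) by ring. lra.
    + apply H2; lra.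
Qed.

End Fibres.

Lemma INR_Z_to_nat a : (0 <= a)%Z -> INR (Z.to_nat a) = IZR a.
Proof. intros h. rewrite INR_IZR_INZ, Z2Nat.id; auto. Qed.

Lemma exists_Z_shift (P : R -> Prop) x (m : Z) :
  (exists j : Z, P (x + IZR m - IZR j)) <-> (exists j : Z, P (x - IZR j)).
Proof.
  split; intros [j Hj].
  - exists (j - m)%Z. rewrite minus_IZR. replace (x - (IZR j - IZR m)) with (x + IZR m - IZR j) by ring. auto.
  - exists (j + m)%Z. rewrite plus_IZR. replace (x + IZR m - (IZR j + IZR m)) with (x - IZR j) by ring. auto.
Qed.

Lemma inI_shift S x m : inI S (x + IZR m) <-> inI S x.
Proof. apply (exists_Z_shift (fun y => _ < y < _)). Qed.

Lemma inK_shift S x m : inK S (x + IZR m) <-> inK S x.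
Proof. apply (exists_Z_shift (fun y => _ < y < _)). Qed.

Lemma inTW_nonneg_iff S a t x : (0 <= a)%Z -> (inTW S a (t, x) <->
  exists s, inI S (t - IZR a * om S) /\ inK S s /\
            fibre_iter S (Z.to_nat a) (t - IZR a * om S) s = x).
Proof.
  intros h. unfold inTW. rewrite (proj2 (Z.leb_le 0 a) h). split.
  - intros [[p1 p2] [[HI HK] He]]. rewrite iterPhi_eq, INR_Z_to_nat in He by auto.
    injection He; intros E1 E2. simpl in *.
    replace p1 with (t - IZR a * om S) in * by lra. eauto.
  - intros [s [HI [HK He]]]. exists (t - IZR a * om S, s). split; [split; auto|].
    rewrite iterPhi_eq, INR_Z_to_nat, He by auto. f_equal. ring.
Qed.

Lemma inTW_neg_iff S a t x : (a < 0)%Z -> (inTW S a (t, x) <->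
  inI S (t - IZR a * om S) /\ inK S (fibre_iter S (Z.to_nat (- a)) t x)).
Proof.
  intros h. unfold inTW. rewrite (proj2 (Z.leb_gt 0 a) h), iterPhi_eq, INR_Z_to_nat by lia.
  unfold inW; simpl. rewrite opp_IZR.
  replace (t + - IZR a * om S) with (t - IZR a * om S) by ring. tauto.
Qed.

Section IteratesOfW.
Variable S : setting.
Hypothesis hS : standing S.

Lemma W_wandering n : (1 <= n)%nat -> forall q, inTW S (Z.of_nat n) q -> inW S q -> False.
Proof. apply hS. Qed.

Lemma inTW_shift_x a t x m : inTW S a (t, x + IZR m) <-> inTW S a (t, x).
Proof.
  destruct (Z_lt_le_dec a 0) as [h|h].
  - rewrite !inTW_neg_iff by auto. rewrite fibre_iter_shift_x, inK_shift by auto. tauto.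
  - rewrite !inTW_nonneg_iff by auto. split; intros [s [H1 [H2 H3]]].
    + exists (s + IZR (- m)). rewrite inK_shift, fibre_iter_shift_x, H3, opp_IZR by auto.
      repeat split; auto. ring.
    + exists (s + IZR m). rewrite inK_shift, fibre_iter_shift_x, H3 by auto. auto.
Qed.

Lemma inTW_shift_t a t x m : inTW S a (t + IZR m, x) <-> inTW S a (t, x).
Proof.
  destruct (Z_lt_le_dec a 0) as [h|h];
    [rewrite !inTW_neg_iff by auto|rewrite !inTW_nonneg_iff by auto];
    replace (t + IZR m - IZR a * om S) with ((t - IZR a * om S) + IZR m) by ring.
  - rewrite fibre_iter_shift_t, inI_shift by auto. tauto.
  - setoid_rewrite inI_shift. setoid_rewrite fibre_iter_shift_t; auto. tauto.
Qed.

Lemma inTW_iterate (j : nat) a t x :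
  inTW S a (t, x) <-> inTW S (a + Z.of_nat j) (t + INR j * om S, fibre_iter S j t x).
Proof.
  assert (Eth : t + INR j * om S - IZR (a + Z.of_nat j) * om S = t - IZR a * om S)
    by (rewrite plus_IZR, <- INR_IZR_INZ; ring).
  destruct (Z_lt_le_dec a 0) as [h|h]; [destruct (Z_lt_le_dec (a + Z.of_nat j) 0) as [h'|h']|].
  - rewrite !inTW_neg_iff, Eth by auto.
    replace (Z.to_nat (- a)) with (Z.to_nat (- (a + Z.of_nat j)) + j)%nat by lia.
    rewrite fibre_iter_add. tauto.
  - assert (Et : t + INR (Z.to_nat (- a)) * om S = t - IZR a * om S)
      by (rewrite INR_Z_to_nat, opp_IZR by lia; ring).
    rewrite inTW_neg_iff, inTW_nonneg_iff, Eth by auto.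
    replace (fibre_iter S j t x)
      with (fibre_iter S (Z.to_nat (a + Z.of_nat j) + Z.to_nat (- a)) t x) by (f_equal; lia).
    rewrite fibre_iter_add, Et.
    split.
    + intros [H1 H2]. eauto.
    + intros [s [H1 [H2 H3]]]. apply (fibre_iter_injective S hS) in H3; subst; auto.
  - rewrite !inTW_nonneg_iff, Eth by lia.
    replace (Z.to_nat (a + Z.of_nat j)) with (j + Z.to_nat a)%nat by lia.
    setoid_rewrite fibre_iter_add. rewrite INR_Z_to_nat by auto.
    replace (t - IZR a * om S + IZR a * om S) with t by ring.
    split; intros [s [H1 [H2 H3]]]; exists s; repeat split; auto.
    + rewrite H3; auto.
    + apply (fibre_iter_injective S hS) in H3; auto.
Qed.

Lemma inTW_disjoint_nonneg a b t x : (0 <= a < b)%Z ->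
  inTW S a (t, x) -> inTW S b (t, x) -> False.
Proof.
  intros hab Ha Hb. rewrite inTW_nonneg_iff in Ha, Hb by lia.
  destruct Ha as [s [Ia [Ka Ea]]], Hb as [s' [Ib [Kb Eb]]].
  set (ta := t - IZR a * om S) in *.
  assert (Etb : t - IZR b * om S = ta - IZR (b - a) * om S) by (unfold ta; rewrite minus_IZR; ring).
  replace (Z.to_nat b) with (Z.to_nat a + Z.to_nat (b - a))%nat in Eb by lia.
  rewrite fibre_iter_add, INR_Z_to_nat, Etb in Eb by lia.
  replace (ta - IZR (b - a) * om S + IZR (b - a) * om S) with ta in Eb by ring.
  rewrite <- Ea in Eb. apply (fibre_iter_injective S hS) in Eb.
  apply (W_wandering (Z.to_nat (b - a)) ltac:(lia) (ta, s)); [|split; auto].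
  rewrite Z2Nat.id, inTW_nonneg_iff by lia. simpl. rewrite Etb in Ib. eauto.
Qed.

Lemma inTW_disjoint a b t x : inTW S a (t, x) -> inTW S b (t, x) -> a = b.
Proof.
  intros Ha Hb. set (j := Z.to_nat (Z.abs a + Z.abs b)).
  rewrite (inTW_iterate j) in Ha, Hb.
  destruct (Z.lt_total a b) as [h|[h|h]]; auto; exfalso.
  - apply (inTW_disjoint_nonneg (a + Z.of_nat j) (b + Z.of_nat j) _ _ ltac:(lia) Ha Hb).
  - apply (inTW_disjoint_nonneg (b + Z.of_nat j) (a + Z.of_nat j) _ _ ltac:(lia) Hb Ha).
Qed.

Lemma inTW_fibre_nonempty a t : inI S (t - IZR a * om S) -> exists x, inTW S a (t, x).
Proof.
  intros H. assert (HK : 0 < lenK S <= 1) by apply hS.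
  assert (K0 : inK S (cK S + lenK S / 2)) by (exists 0%Z; simpl; lra).
  destruct (Z_lt_le_dec a 0) as [h|h].
  - destruct (fibre_iter_surjective S hS (Z.to_nat (- a)) t (cK S + lenK S / 2)) as [x Hx].
    exists x. rewrite inTW_neg_iff, Hx by auto. auto.
  - exists (fibre_iter S (Z.to_nat a) (t - IZR a * om S) (cK S + lenK S / 2)).
    rewrite inTW_nonneg_iff by auto. eauto.
Qed.

End IteratesOfW.

Definition ccw (x y z : R) : Prop :=
  exists m1 m2 : Z, x < y + IZR m1 < z + IZR m2 /\ z + IZR m2 < x + 1.

Definition ccw4 (x y z w : R) : Prop :=
  exists m1 m2 m3 : Z, x < y + IZR m1 < z + IZR m2 /\ z + IZR m2 < w + IZR m3 < x + 1.

Lemma IZR_unique_in_unit_interval (m1 m2 : Z) (u : R) :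
  u < IZR m1 < u + 1 -> u < IZR m2 < u + 1 -> m1 = m2.
Proof.
  intros H1 H2.
  assert (hlt : IZR (m1 - m2) < 1) by (rewrite minus_IZR; lra).
  assert (hgt : -1 < IZR (m1 - m2)) by (rewrite minus_IZR; lra).
  apply lt_IZR in hlt. apply lt_IZR in hgt. lia.
Qed.

Lemma ccw4_of_ccw_xyz_xzw x y z w : ccw x y z -> ccw x z w -> ccw4 x y z w.
Proof.
  intros [m1 [m2 H]] [m2' [m3 H']].
  assert (m2 = m2') by (apply (IZR_unique_in_unit_interval _ _ (x - z)); lra). subst.
  exists m1, m2', m3. lra.
Qed.

Lemma ccw4_of_ccw_xyw_yzw x y z w : ccw x y w -> ccw y z w -> ccw4 x y z w.
Proof.
  intros [m1 [m3 H]] [m2 [m3' H']].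
  assert (m3 = (m3' + m1)%Z)
    by (apply (IZR_unique_in_unit_interval _ _ (y + IZR m1 - w)); rewrite ?plus_IZR; lra).
  subst. exists m1, (m2 + m1)%Z, (m3' + m1)%Z. rewrite !plus_IZR in *. lra.
Qed.

Lemma ccw4_xyz x y z w : ccw4 x y z w -> ccw x y z.
Proof. intros [m1 [m2 [m3 H]]]. exists m1, m2. lra. Qed.

Lemma ccw4_xyw x y z w : ccw4 x y z w -> ccw x y w.
Proof. intros [m1 [m2 [m3 H]]]. exists m1, m3. lra. Qed.

Lemma ccw4_xzw x y z w : ccw4 x y z w -> ccw x z w.
Proof. intros [m1 [m2 [m3 H]]]. exists m2, m3. lra. Qed.

Lemma ccw4_yzw x y z w : ccw4 x y z w -> ccw y z w.
Proof. intros [m1 [m2 [m3 H]]]. exists (m2 - m1)%Z, (m3 - m1)%Z. rewrite !minus_IZR. lra. Qed.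

Lemma ccw_pairwise_distinct x y z : ccw x y z -> x <> y /\ y <> z /\ x <> z.
Proof.
  intros [m1 [m2 H]].
  assert (N : forall m : Z, ~ 0 < IZR m < 1)
    by (intros m [h1 h2]; apply lt_IZR in h1; apply lt_IZR in h2; lia).
  repeat split; intros E; subst.
  - apply (N m1). lra.
  - apply (N (m2 - m1)%Z). rewrite minus_IZR. lra.
  - apply (N m2). lra.
Qed.

Lemma ccw_lift_invariant (g : R -> R) x y z :
  (forall a b, a < b -> g a < g b) -> (forall a (m : Z), g (a + IZR m) = g a + IZR m) ->
  (ccw x y z <-> ccw (g x) (g y) (g z)).
Proof.
  intros Hm Hs.
  assert (Hr : forall a b, g a < g b -> a < b).
  { intros a b h. destruct (Rlt_le_dec a b) as [|[h'|h']]; auto.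
    - apply Hm in h'; lra.
    - subst; lra. }
  (* The rewrite also folds [g x + 1] into [g (x + IZR 1)]. *)
  split; intros [m1 [m2 H]]; exists m1, m2; rewrite <- !Hs in *.
  - repeat split; apply Hm; simpl; lra.
  - simpl in H. repeat split; apply Hr; tauto.
Qed.

(* Each pairwise difference stays between the same two consecutive integers. *)
Lemma ccw_continuation (f g h : R -> R) :
  (forall t, 0 <= t <= 1 -> continuity_pt f t) ->
  (forall t, 0 <= t <= 1 -> continuity_pt g t) ->
  (forall t, 0 <= t <= 1 -> continuity_pt h t) ->
  (forall t, 0 <= t <= 1 -> forall q : Z, g t - f t <> IZR q) ->
  (forall t, 0 <= t <= 1 -> forall q : Z, h t - f t <> IZR q) ->
  (forall t, 0 <= t <= 1 -> forall q : Z, h t - g t <> IZR q) ->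
  ccw (f 0) (g 0) (h 0) -> ccw (f 1) (g 1) (h 1).
Proof.
  intros cf cg ch n1 n2 n3 [m1 [m2 H]]. exists m1, m2.
  assert (Hc : forall u v, (forall t, 0 <= t <= 1 -> continuity_pt u t) ->
                 (forall t, 0 <= t <= 1 -> continuity_pt v t) ->
                 forall t, 0 <= t <= 1 -> continuity_pt (fun s => u s - v s) t)
    by (intros; apply continuity_pt_minus; auto).
  assert (B1 := continuous_avoiding_Z_stays (fun t => g t - f t) (- m1) (Hc _ _ cg cf) n1).
  assert (B2 := continuous_avoiding_Z_stays (fun t => h t - f t) (- m2) (Hc _ _ ch cf) n2).
  assert (B3 := continuous_avoiding_Z_stays (fun t => h t - g t) (m1 - m2) (Hc _ _ ch cg) n3).
  simpl in B1, B2, B3. rewrite opp_IZR in B1, B2. rewrite minus_IZR in B3. lra.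
Qed.

Ltac invert_sorted := repeat match goal with
  | h : Sorted _ (_ :: _) |- _ => inversion_clear h
  | h : HdRel _ _ (_ :: _) |- _ => inversion_clear h end.

Lemma cyc_order3_iff x y z : cyc_order (x :: y :: z :: nil) <-> ccw x y z.
Proof.
  split.
  - intros [ys [H1 [H2 H3]]].
    inversion H1 as [|y0 x0 l1 l2 [z0 E0] F1]; subst.
    inversion F1 as [|y1 x1 l3 l4 [z1 E1] F2]; subst.
    inversion F2 as [|y2 x2 l5 l6 [z2 E2] F3]; subst.
    inversion F3; subst. invert_sorted. simpl in H3.
    exists (z1 - z0)%Z, (z2 - z0)%Z. rewrite !minus_IZR. lra.
  - intros [m1 [m2 H]]. exists (x :: y + IZR m1 :: z + IZR m2 :: nil).
    repeat split.
    + repeat constructor; [exists 0%Z|exists m1|exists m2]; simpl; ring.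
    + repeat constructor; lra.
    + simpl; lra.
Qed.

Lemma cyc_order4_iff x y z w : cyc_order (x :: y :: z :: w :: nil) <-> ccw4 x y z w.
Proof.
  split.
  - intros [ys [H1 [H2 H3]]].
    inversion H1 as [|y0 x0 l1 l2 [z0 E0] F1]; subst.
    inversion F1 as [|y1 x1 l3 l4 [z1 E1] F2]; subst.
    inversion F2 as [|y2 x2 l5 l6 [z2 E2] F3]; subst.
    inversion F3 as [|y3 x3 l7 l8 [z3 E3] F4]; subst.
    inversion F4; subst. invert_sorted. simpl in H3.
    exists (z1 - z0)%Z, (z2 - z0)%Z, (z3 - z0)%Z. rewrite !minus_IZR. lra.
  - intros [m1 [m2 [m3 H]]]. exists (x :: y + IZR m1 :: z + IZR m2 :: w + IZR m3 :: nil).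
    repeat split.
    + repeat constructor; [exists 0%Z|exists m1|exists m2|exists m3]; simpl; ring.
    + repeat constructor; lra.
    + simpl; lra.
Qed.

Definition fibre_ccw S a b c t : Prop := forall x y z,
  inTW S a (t, x) -> inTW S b (t, y) -> inTW S c (t, z) -> ccw x y z.

Definition rotation_offset S (i : Z) (e : R) : Prop := exists p : Z, IZR i * om S = IZR p + e.

Lemma rotation_offset_0 S : rotation_offset S 0 0.
Proof. exists 0%Z. simpl; ring. Qed.

Lemma rotation_offset_opp S i e : rotation_offset S i e -> rotation_offset S (- i) (- e).
Proof. intros [p h]. exists (- p)%Z. rewrite !opp_IZR. lra. Qed.

Lemma rotation_offset_sub S i j ei ej : rotation_offset S i ei -> rotation_offset S j ej ->
  rotation_offset S (j - i) (ej - ei).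
Proof. intros [p h1] [q h2]. exists (q - p)%Z. rewrite !minus_IZR. lra. Qed.

Lemma inI_of_rotation_offset S i e s : rotation_offset S i e ->
  -(lenI S / 2) < s - e < lenI S / 2 -> inI S (s - IZR i * om S).
Proof.
  intros [p E] h. exists (- p)%Z. rewrite E, opp_IZR.
  replace (s - (IZR p + e) - - IZR p) with (s - e) by ring. lra.
Qed.

Lemma segment_in_interval c p q u : -c < p < c -> -c < q < c -> 0 <= u <= 1 ->
  -c < p + u * (q - p) < c.
Proof. intros Hp Hq Hu. destruct (Req_dec u 0); [subst; lra|nra]. Qed.

Section FibreOrder.
Variable S : setting.
Hypothesis hS : standing S.

Lemma fibre_ccw_shift_t a b c t m : fibre_ccw S a b c (t + IZR m) <-> fibre_ccw S a b c t.
Proof. unfold fibre_ccw. setoid_rewrite inTW_shift_t; auto. tauto. Qed.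

Lemma fibre_ccw_iterate (j : nat) a b c t : fibre_ccw S a b c t <->
  fibre_ccw S (a + Z.of_nat j) (b + Z.of_nat j) (c + Z.of_nat j) (t + INR j * om S).
Proof.
  assert (Hinv : forall x y z, ccw x y z <->
            ccw (fibre_iter S j t x) (fibre_iter S j t y) (fibre_iter S j t z)).
  { intros. apply ccw_lift_invariant; intros.
    - apply fibre_iter_increasing; auto.
    - apply fibre_iter_shift_x; auto. }
  split; intros H.
  - intros y1 y2 y3 H1 H2 H3.
    destruct (fibre_iter_surjective S hS j t y1) as [x1 <-].
    destruct (fibre_iter_surjective S hS j t y2) as [x2 <-].
    destruct (fibre_iter_surjective S hS j t y3) as [x3 <-].
    rewrite <- !inTW_iterate in H1, H2, H3 by auto.
    apply (proj1 (Hinv _ _ _)), H; auto.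
  - intros x1 x2 x3 H1 H2 H3.
    rewrite (inTW_iterate S hS j) in H1, H2, H3.
    apply (proj2 (Hinv _ _ _)), H; auto.
Qed.

Lemma fibre_ccw_translate j e a b c s a' b' c' s' : rotation_offset S j e ->
  (a' = a + j)%Z -> (b' = b + j)%Z -> (c' = c + j)%Z -> s' = s + e ->
  fibre_ccw S a b c s -> fibre_ccw S a' b' c' s'.
Proof.
  intros [p Hj] -> -> -> ->. destruct (Z_lt_le_dec j 0) as [h|h].
  - set (jn := Z.to_nat (- j)).
    rewrite (fibre_ccw_iterate jn (a + j)).
    replace (s + e + INR jn * om S) with (s + IZR (- p))
      by (unfold jn; rewrite INR_Z_to_nat, !opp_IZR by lia; nra).
    rewrite fibre_ccw_shift_t.
    replace (a + j + Z.of_nat jn)%Z with a by lia.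
    replace (b + j + Z.of_nat jn)%Z with b by lia.
    replace (c + j + Z.of_nat jn)%Z with c by lia. auto.
  - rewrite (fibre_ccw_iterate (Z.to_nat j)), INR_Z_to_nat, Z2Nat.id, Hj by auto.
    replace (s + (IZR p + e)) with ((s + e) + IZR p) by ring.
    rewrite fibre_ccw_shift_t. auto.
Qed.

Lemma inTW_path a t0 t1 x : (0 <= a)%Z -> inTW S a (t1, x) ->
  (forall u, 0 <= u <= 1 -> inI S (t0 + u * (t1 - t0) - IZR a * om S)) ->
  exists X : R -> R, (forall u, continuity_pt X u) /\
    (forall u, 0 <= u <= 1 -> inTW S a (t0 + u * (t1 - t0), X u)) /\ X 1 = x.
Proof.
  intros ha Hx Hp. rewrite inTW_nonneg_iff in Hx by auto.
  destruct Hx as [s [HI [[ja HK] Hs]]].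
  assert (HKp : 0 < lenK S <= 1) by apply hS.
  set (mid := cK S + lenK S / 2 + IZR ja).
  (* Slide the base point linearly from the centre of K to s inside K, and push it forward. *)
  exists (fun u => fibre_iter S (Z.to_nat a) ((t0 - IZR a * om S) + u * (t1 - t0)) (mid + u * (s - mid))).
  split; [|split].
  - intros u. apply jointly_continuous_along_line, fibre_iter_jointly_continuous; auto.
  - intros u Hu. rewrite inTW_nonneg_iff by auto. exists (mid + u * (s - mid)). split; [|split].
    + apply Hp; auto.
    + exists ja.
      pose proof (segment_in_interval (lenK S / 2) (mid - IZR ja - (cK S + lenK S / 2))
                    (s - IZR ja - (cK S + lenK S / 2)) u ltac:(unfold mid; lra) ltac:(lra) Hu).
      unfold mid in *. nra.
    + f_equal. ring.
  - simpl. rewrite <- Hs. f_equal; ring.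
Qed.

Lemma fibre_ccw_continuation_nonneg a b c t0 t1 : (0 <= a)%Z -> (0 <= b)%Z -> (0 <= c)%Z ->
  a <> b -> b <> c -> a <> c ->
  (forall u, 0 <= u <= 1 -> inI S (t0 + u * (t1 - t0) - IZR a * om S) /\
      inI S (t0 + u * (t1 - t0) - IZR b * om S) /\ inI S (t0 + u * (t1 - t0) - IZR c * om S)) ->
  fibre_ccw S a b c t0 -> fibre_ccw S a b c t1.
Proof.
  intros ha hb hc nab nbc nac Hp H x y z Hx Hy Hz.
  destruct (inTW_path a t0 t1 x ha Hx (fun u h => proj1 (Hp u h))) as [X [cX [fX <-]]].
  destruct (inTW_path b t0 t1 y hb Hy (fun u h => proj1 (proj2 (Hp u h)))) as [Y [cY [fY <-]]].
  destruct (inTW_path c t0 t1 z hc Hz (fun u h => proj2 (proj2 (Hp u h)))) as [V [cV [fV <-]]].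
  assert (Hapart : forall a' b' (P Q : R -> R), a' <> b' ->
     (forall u, 0 <= u <= 1 -> inTW S a' (t0 + u * (t1 - t0), P u)) ->
     (forall u, 0 <= u <= 1 -> inTW S b' (t0 + u * (t1 - t0), Q u)) ->
     forall u, 0 <= u <= 1 -> forall q : Z, Q u - P u <> IZR q).
  { intros a' b' P Q n fP fQ u Hu q E. apply n.
    apply (inTW_disjoint S hS a' b' (t0 + u * (t1 - t0)) (P u)); auto.
    replace (P u) with (Q u + IZR (- q)) by (rewrite opp_IZR; lra).
    rewrite inTW_shift_x; auto. }
  assert (E0 : t0 = t0 + 0 * (t1 - t0)) by ring.
  apply ccw_continuation; auto.
  - apply Hapart with a b; auto.
  - apply Hapart with a c; auto.
  - apply Hapart with b c; auto.
  - rewrite E0 in H. apply H; [apply fX|apply fY|apply fV]; lra.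
Qed.

(* A large iterate first reduces to nonnegative indices, whose fibres can be followed
   continuously by inTW_path. *)
Lemma fibre_ccw_continuation a b c t0 t1 : a <> b -> b <> c -> a <> c ->
  (forall u, 0 <= u <= 1 -> inI S (t0 + u * (t1 - t0) - IZR a * om S) /\
      inI S (t0 + u * (t1 - t0) - IZR b * om S) /\ inI S (t0 + u * (t1 - t0) - IZR c * om S)) ->
  fibre_ccw S a b c t0 -> fibre_ccw S a b c t1.
Proof.
  intros nab nbc nac Hp H.
  set (j := Z.to_nat (Z.abs a + Z.abs b + Z.abs c)).
  rewrite (fibre_ccw_iterate j) in H |- *.
  apply fibre_ccw_continuation_nonneg with (t0 := t0 + INR j * om S); try lia; auto.
  intros u Hu.
  assert (E : forall i, t0 + INR j * om S + u * (t1 + INR j * om S - (t0 + INR j * om S))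
                        - IZR (i + Z.of_nat j) * om S = t0 + u * (t1 - t0) - IZR i * om S)
    by (intros; rewrite plus_IZR, <- INR_IZR_INZ; ring).
  rewrite !E. auto.
Qed.

Lemma fibre_ccw_continuation_offsets a b c ea eb ec t0 t1 : a <> b -> b <> c -> a <> c ->
  rotation_offset S a ea -> rotation_offset S b eb -> rotation_offset S c ec ->
  (forall e, e = ea \/ e = eb \/ e = ec ->
     -(lenI S / 2) < t0 - e < lenI S / 2 /\ -(lenI S / 2) < t1 - e < lenI S / 2) ->
  fibre_ccw S a b c t0 -> fibre_ccw S a b c t1.
Proof.
  intros nab nbc nac Ha Hb Hc Hnear. apply fibre_ccw_continuation; auto.
  intros u Hu.
  assert (K : forall i e, rotation_offset S i e -> e = ea \/ e = eb \/ e = ec ->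
                inI S (t0 + u * (t1 - t0) - IZR i * om S)).
  { intros i e Hi He. destruct (Hnear e He) as [h0 h1].
    apply (inI_of_rotation_offset S i e); auto.
    replace (t0 + u * (t1 - t0) - e) with (t0 - e + u * (t1 - e - (t0 - e))) by ring.
    apply segment_in_interval; auto. }
  split; [|split]; eapply K; eauto.
Qed.

Lemma fibre_ccw_distinct a b c t : fibre_ccw S a b c t ->
  inI S (t - IZR a * om S) -> inI S (t - IZR b * om S) -> inI S (t - IZR c * om S) ->
  a <> b /\ b <> c /\ a <> c.
Proof.
  intros H ha hb hc.
  destruct (inTW_fibre_nonempty S hS a t ha) as [x hx].
  destruct (inTW_fibre_nonempty S hS b t hb) as [y hy].
  destruct (inTW_fibre_nonempty S hS c t hc) as [z hz].
  repeat split; intros <-.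
  - pose proof (ccw_pairwise_distinct x x z (H _ _ _ hx hx hz)); tauto.
  - pose proof (ccw_pairwise_distinct x y y (H _ _ _ hx hy hy)); tauto.
  - pose proof (ccw_pairwise_distinct x y x (H _ _ _ hx hy hx)); tauto.
Qed.

End FibreOrder.

Definition comparable1 S (J : R -> Prop) (a : Z) : Prop :=
  forall t, J t -> inI S (t - IZR a * om S).

Definition fibre_ccw4 S a b c d t : Prop := forall x y z w,
  inTW S a (t, x) -> inTW S b (t, y) -> inTW S c (t, z) -> inTW S d (t, w) -> ccw4 x y z w.

Lemma lhd3_iff S a b c J : lhd S (a :: b :: c :: nil) J <->
  (comparable1 S J a /\ comparable1 S J b /\ comparable1 S J c) /\
  (forall t, J t -> fibre_ccw S a b c t).
Proof.
  unfold lhd, comparable, comparable1, fibre_ccw. split.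
  - intros [_ [H1 H2]]. split.
    + repeat split; intros t Ht; specialize (H1 t Ht); rewrite !Forall_cons_iff in H1; tauto.
    + intros t Ht x y z Hx Hy Hz. apply cyc_order3_iff, (H2 t); auto; repeat constructor; auto.
  - intros [[H1 [H2 H3]] H4]. split; [simpl; lia|split].
    + intros t Ht. repeat constructor; auto.
    + intros t xs Ht HF.
      inversion HF as [|a1 x1 l1 l1' E1 F1]; subst.
      inversion F1 as [|a2 x2 l2 l2' E2 F2]; subst.
      inversion F2 as [|a3 x3 l3 l3' E3 F3]; subst.
      inversion F3; subst. apply cyc_order3_iff, (H4 t); auto.
Qed.

Lemma lhd3_fibre_ccw S a b c J t : lhd S (a :: b :: c :: nil) J -> J t -> fibre_ccw S a b c t.
Proof. intros H. apply lhd3_iff in H. apply H. Qed.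

Lemma lhd4_iff S a b c d J : lhd S (a :: b :: c :: d :: nil) J <->
  (comparable1 S J a /\ comparable1 S J b /\ comparable1 S J c /\ comparable1 S J d) /\
  (forall t, J t -> fibre_ccw4 S a b c d t).
Proof.
  unfold lhd, comparable, comparable1, fibre_ccw4. split.
  - intros [_ [H1 H2]]. split.
    + repeat split; intros t Ht; specialize (H1 t Ht); rewrite !Forall_cons_iff in H1; tauto.
    + intros t Ht x y z w Hx Hy Hz Hw. apply cyc_order4_iff, (H2 t); auto; repeat constructor; auto.
  - intros [[H1 [H2 [H3 H5]]] H4]. split; [simpl; lia|split].
    + intros t Ht. repeat constructor; auto.
    + intros t xs Ht HF.
      inversion HF as [|a1 x1 l1 l1' E1 F1]; subst.
      inversion F1 as [|a2 x2 l2 l2' E2 F2]; subst.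
      inversion F2 as [|a3 x3 l3 l3' E3 F3]; subst.
      inversion F3 as [|a4 x4 l4 l4' E4 F4]; subst.
      inversion F4; subst. apply cyc_order4_iff, (H4 t); auto.
Qed.

Section LhdCombinations.
Variable S : setting.
Hypothesis hS : standing S.

Lemma lhd4_of_abc_acd a b c d J : lhd S (a :: b :: c :: nil) J -> lhd S (a :: c :: d :: nil) J ->
  lhd S (a :: b :: c :: d :: nil) J.
Proof.
  rewrite !lhd3_iff, lhd4_iff. intros [[h1 [h2 h3]] H] [[_ [_ h4]] H'].
  split; [tauto|]. intros t Ht x y z w Hx Hy Hz Hw.
  apply ccw4_of_ccw_xyz_xzw; [apply (H t)|apply (H' t)]; auto.
Qed.

Lemma lhd4_of_abd_bcd a b c d J : lhd S (a :: b :: d :: nil) J -> lhd S (b :: c :: d :: nil) J ->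
  lhd S (a :: b :: c :: d :: nil) J.
Proof.
  rewrite !lhd3_iff, lhd4_iff. intros [[h1 [h2 h3]] H] [[_ [h4 _]] H'].
  split; [tauto|]. intros t Ht x y z w Hx Hy Hz Hw.
  apply ccw4_of_ccw_xyw_yzw; [apply (H t)|apply (H' t)]; auto.
Qed.

Lemma lhd4_abc a b c d J : lhd S (a :: b :: c :: d :: nil) J -> lhd S (a :: b :: c :: nil) J.
Proof.
  rewrite lhd3_iff, lhd4_iff. intros [[h1 [h2 [h3 h4]]] H]. split; [tauto|].
  intros t Ht x y z Hx Hy Hz. destruct (inTW_fibre_nonempty S hS d t (h4 t Ht)) as [w Hw].
  apply (ccw4_xyz _ _ _ w), (H t); auto.
Qed.

Lemma lhd4_abd a b c d J : lhd S (a :: b :: c :: d :: nil) J -> lhd S (a :: b :: d :: nil) J.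
Proof.
  rewrite lhd3_iff, lhd4_iff. intros [[h1 [h2 [h3 h4]]] H]. split; [tauto|].
  intros t Ht x y w Hx Hy Hw. destruct (inTW_fibre_nonempty S hS c t (h3 t Ht)) as [z Hz].
  apply (ccw4_xyw _ _ z), (H t); auto.
Qed.

Lemma lhd4_acd a b c d J : lhd S (a :: b :: c :: d :: nil) J -> lhd S (a :: c :: d :: nil) J.
Proof.
  rewrite lhd3_iff, lhd4_iff. intros [[h1 [h2 [h3 h4]]] H]. split; [tauto|].
  intros t Ht x z w Hx Hz Hw. destruct (inTW_fibre_nonempty S hS b t (h2 t Ht)) as [y Hy].
  apply (ccw4_xzw _ y), (H t); auto.
Qed.

Lemma lhd4_bcd a b c d J : lhd S (a :: b :: c :: d :: nil) J -> lhd S (b :: c :: d :: nil) J.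
Proof.
  rewrite lhd3_iff, lhd4_iff. intros [[h1 [h2 [h3 h4]]] H]. split; [tauto|].
  intros t Ht y z w Hy Hz Hw. destruct (inTW_fibre_nonempty S hS a t (h1 t Ht)) as [x Hx].
  apply (ccw4_yzw x), (H t); auto.
Qed.

End LhdCombinations.

Lemma offset_upper_bound c r e : 0 < r <= c -> 2 * c + r / 2 < 1 -> -c < e < c ->
  (forall θ, -r < θ < r -> exists j : Z, -c < θ - e - IZR j < c) -> e <= c - r.
Proof.
  intros hr hc he H. apply Rnot_lt_le; intros Hlt.
  destruct (H ((e - c - r) / 2) ltac:(lra)) as [j Hj].
  destruct (Z_le_gt_dec 0 j) as [hj|hj].
  - apply IZR_le in hj. lra.
  - assert (hj' : IZR j <= -1) by (apply IZR_le; lia). lra.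
Qed.

Lemma offset_bounds c r e : 0 < r <= c -> 2 * c + r / 2 < 1 -> -c < e < c ->
  (forall θ, -r < θ < r -> exists j : Z, -c < θ - e - IZR j < c) -> -(c - r) <= e <= c - r.
Proof.
  intros hr hc he H. split; [|apply offset_upper_bound; auto].
  enough (- e <= c - r) by lra.
  apply offset_upper_bound; [auto|auto|lra|].
  intros θ hθ. destruct (H (- θ) ltac:(lra)) as [j Hj]. exists (- j)%Z.
  rewrite opp_IZR. lra.
Qed.

Section Ialpha.
Variable S : setting.
Hypothesis hS : standing S.
Variable alpha : R.
Hypothesis halpha : 0 < alpha <= 1.

Local Notation c := (lenI S / 2).
Local Notation r := (alpha * lenI S / 2).

Lemma Ialpha_radius_bounds : 0 < r <= c /\ c < 1 / 4.
Proof. assert (0 < lenI S < 1 / 2) by apply hS. split; [split|]; nra. Qed.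

Lemma Ialpha_of_centered s : -r < s < r -> Ialpha S alpha s.
Proof. intros h. exists 0%Z. rewrite Rminus_0_r. apply Rabs_def1; lra. Qed.

Lemma comparable_Ialpha_offset i : comparable1 S (Ialpha S alpha) i ->
  exists e, rotation_offset S i e /\ -(c - r) <= e <= c - r.
Proof.
  intros H. destruct Ialpha_radius_bounds as [hr hc].
  assert (H0 : Ialpha S alpha 0) by (apply Ialpha_of_centered; lra).
  destruct (H 0 H0) as [j0 Hj0].
  exists (IZR i * om S + IZR j0). split; [exists (- j0)%Z; rewrite opp_IZR; ring|].
  apply offset_bounds; [auto|lra|lra|].
  intros θ hθ. destruct (H θ (Ialpha_of_centered θ hθ)) as [j Hj]. exists (j - j0)%Z.
  rewrite minus_IZR. lra.
Qed.

Lemma comparable_Ialpha_of_offset i e : rotation_offset S i e -> -(c - r) <= e <= c - r ->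
  comparable1 S (Ialpha S alpha) i.
Proof.
  intros E h θ [j Hj]. apply Rabs_def2 in Hj.
  replace (θ - IZR i * om S) with ((θ - IZR j - IZR i * om S) + IZR j) by ring.
  apply inI_shift. apply (inI_of_rotation_offset S i e); auto. lra.
Qed.

Lemma comparable_Ialpha_opp i : comparable1 S (Ialpha S alpha) i -> comparable1 S (Ialpha S alpha) (- i).
Proof.
  intros H. destruct (comparable_Ialpha_offset i H) as [e [E h]].
  apply (comparable_Ialpha_of_offset _ (- e)); [apply rotation_offset_opp; auto|lra].
Qed.

Lemma fibre_ccw_Ialpha a b d : (forall τ, -r < τ < r -> fibre_ccw S a b d τ) ->
  forall θ, Ialpha S alpha θ -> fibre_ccw S a b d θ.
Proof.
  intros H θ [j Hj]. apply Rabs_def2 in Hj.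
  replace θ with ((θ - IZR j) + IZR j) by ring.
  apply fibre_ccw_shift_t, H; auto. lra.
Qed.

End Ialpha.

(* Every parameter visited below lies within |I|/2 of each offset involved, because the
   offsets have size at most |I|/2 - α|I|/2 and φ is the midpoint of two of them. *)
Section Reflection.
Variable S : setting.
Hypothesis hS : standing S.
Variables (n k : Z) (r en ek : R).
Hypothesis hr : 0 < r <= lenI S / 2.
Hypothesis En : rotation_offset S n en.
Hypothesis Ek : rotation_offset S k ek.
Hypothesis hn : -(lenI S / 2 - r) <= en <= lenI S / 2 - r.
Hypothesis hk : -(lenI S / 2 - r) <= ek <= lenI S / 2 - r.

Lemma fibre_ccw_reflect :
  (forall s, -r < s < r -> fibre_ccw S (- n) 0 k s /\ fibre_ccw S 0 k n s) ->
  forall τ, -r < τ < r -> fibre_ccw S (- n) (- k) 0 τ.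
Proof.
  intros HL τ hτ.
  pose proof (rotation_offset_0 S) as Z0. pose proof (rotation_offset_opp _ _ _ En) as Emn.
  pose proof (rotation_offset_sub _ _ _ _ _ En Ek) as Ekn.
  destruct (HL 0 ltac:(lra)) as [H1 H2].
  destruct (fibre_ccw_distinct S hS _ _ _ _ H1) as [d1 [d2 d3]];
    try (eapply inI_of_rotation_offset; [eassumption|lra]).
  destruct (fibre_ccw_distinct S hS _ _ _ _ H2) as [d4 [d5 d6]];
    try (eapply inI_of_rotation_offset; [eassumption|lra]).
  destruct (HL τ hτ) as [Hτ1 Hτ2].
  set (φ := (ek - en) / 2).
  assert (Ha : fibre_ccw S 0 k n (φ + en)).
  { apply (fibre_ccw_continuation_offsets S hS 0 k n 0 ek en τ); auto.
    intros e [-> | [-> | ->]]; unfold φ; lra. }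
  assert (Hb : fibre_ccw S (- n) (k - n) 0 φ)
    by (apply (fibre_ccw_translate S hS (- n) (- en) 0 k n (φ + en)); auto; first [lia | lra]).
  assert (Hc : fibre_ccw S (- n) 0 k φ).
  { apply (fibre_ccw_continuation_offsets S hS (- n) 0 k (- en) 0 ek τ); auto.
    intros e [-> | [-> | ->]]; unfold φ; lra. }
  assert (Hd : fibre_ccw S (k - n) 0 k φ).
  { intros x y z Hx Hy Hz.
    destruct (inTW_fibre_nonempty S hS (- n) φ) as [w Hw];
      [eapply inI_of_rotation_offset; [exact Emn|unfold φ; lra]|].
    apply (ccw4_yzw w), ccw4_of_ccw_xyz_xzw; [apply Hb|apply Hc]; auto. }
  assert (He : fibre_ccw S (k - n) 0 k (τ + ek)).
  { apply (fibre_ccw_continuation_offsets S hS (k - n) 0 k (ek - en) 0 ek φ); auto; try lia.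
    intros e [-> | [-> | ->]]; unfold φ; lra. }
  apply (fibre_ccw_translate S hS (- k) (- ek) (k - n) 0 k (τ + ek));
    auto using rotation_offset_opp; first [lia | lra].
Qed.

Lemma fibre_ccw_reflect_back :
  (forall s, -r < s < r -> fibre_ccw S (- n) (- k) 0 s /\ fibre_ccw S (- k) 0 n s) ->
  forall τ, -r < τ < r -> fibre_ccw S 0 k n τ.
Proof.
  intros HL τ hτ.
  pose proof (rotation_offset_0 S) as Z0. pose proof (rotation_offset_opp _ _ _ En) as Emn.
  pose proof (rotation_offset_opp _ _ _ Ek) as Emk.
  pose proof (rotation_offset_sub _ _ _ _ _ Ek En) as Enk.
  destruct (HL 0 ltac:(lra)) as [H1 H2].
  destruct (fibre_ccw_distinct S hS _ _ _ _ H1) as [d1 [d2 d3]];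
    try (eapply inI_of_rotation_offset; [eassumption|lra]).
  destruct (fibre_ccw_distinct S hS _ _ _ _ H2) as [d4 [d5 d6]];
    try (eapply inI_of_rotation_offset; [eassumption|lra]).
  destruct (HL τ hτ) as [Hτ1 Hτ2].
  set (φ := (en - ek) / 2).
  assert (Ha : fibre_ccw S (- n) (- k) 0 (φ - en)).
  { apply (fibre_ccw_continuation_offsets S hS (- n) (- k) 0 (- en) (- ek) 0 τ); auto.
    intros e [-> | [-> | ->]]; unfold φ; lra. }
  assert (Hb : fibre_ccw S 0 (n - k) n φ)
    by (apply (fibre_ccw_translate S hS n en (- n) (- k) 0 (φ - en)); auto; first [lia | lra]).
  assert (Hc : fibre_ccw S (- k) 0 n φ).
  { apply (fibre_ccw_continuation_offsets S hS (- k) 0 n (- ek) 0 en τ); auto.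
    intros e [-> | [-> | ->]]; unfold φ; lra. }
  assert (Hd : fibre_ccw S (- k) 0 (n - k) φ).
  { intros x y z Hx Hy Hz.
    destruct (inTW_fibre_nonempty S hS n φ) as [w Hw];
      [eapply inI_of_rotation_offset; [exact En|unfold φ; lra]|].
    apply (ccw4_xyz _ _ _ w), ccw4_of_ccw_xyw_yzw; [apply Hc|apply Hb]; auto. }
  assert (He : fibre_ccw S (- k) 0 (n - k) (τ - ek)).
  { apply (fibre_ccw_continuation_offsets S hS (- k) 0 (n - k) (- ek) 0 (en - ek) φ); auto; try lia.
    intros e [-> | [-> | ->]]; unfold φ; lra. }
  apply (fibre_ccw_translate S hS k ek (- k) 0 (n - k) (τ - ek)); auto; first [lia | lra].
Qed.

End Reflection.

Section ClosestReturns.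
Variable S : setting.
Hypothesis hS : standing S.
Variable alpha : R.
Hypothesis halpha : 0 < alpha <= 1.

Local Notation J := (Ialpha S alpha).

Lemma lhd4_reflect n k :
  lhd S ((- n)%Z :: 0%Z :: k :: n :: nil) J <-> lhd S ((- n)%Z :: (- k)%Z :: 0%Z :: n :: nil) J.
Proof.
  destruct (Ialpha_radius_bounds S hS alpha halpha) as [hr _].
  assert (Hcentre : forall a b c, lhd S (a :: b :: c :: nil) J ->
            forall s, -(alpha * lenI S / 2) < s < alpha * lenI S / 2 -> fibre_ccw S a b c s)
    by (intros; eapply lhd3_fibre_ccw; [eassumption|apply Ialpha_of_centered; auto]).
  split; intros H; pose proof H as H'; rewrite lhd4_iff in H'.
  - destruct H' as [[cmn [c0 [ck cn]]] _].
    destruct (comparable_Ialpha_offset S hS alpha halpha _ cn) as [en [En hn]].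
    destruct (comparable_Ialpha_offset S hS alpha halpha _ ck) as [ek [Ek hk]].
    apply lhd4_of_abc_acd; [|apply (lhd4_abd S hS _ _ k); auto].
    apply lhd3_iff. split; [repeat split; auto using comparable_Ialpha_opp|].
    apply fibre_ccw_Ialpha; auto.
    apply (fibre_ccw_reflect S hS n k _ en ek); auto.
    intros s hs. split; apply Hcentre; auto.
    + apply (lhd4_abc S hS _ _ _ n); auto.
    + apply (lhd4_bcd S hS (- n)); auto.
  - destruct H' as [[cmn [cmk [c0 cn]]] _].
    assert (ck : comparable1 S J k)
      by (rewrite <- (Z.opp_involutive k); apply comparable_Ialpha_opp; auto).
    destruct (comparable_Ialpha_offset S hS alpha halpha _ cn) as [en [En hn]].
    destruct (comparable_Ialpha_offset S hS alpha halpha _ ck) as [ek [Ek hk]].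
    apply lhd4_of_abd_bcd; [apply (lhd4_acd S hS _ (- k)); auto|].
    apply lhd3_iff. split; [repeat split; auto|].
    apply fibre_ccw_Ialpha; auto.
    apply (fibre_ccw_reflect_back S hS n k _ en ek); auto.
    intros s hs. split; apply Hcentre; auto.
    + apply (lhd4_abc S hS _ _ _ n); auto.
    + apply (lhd4_bcd S hS (- n)); auto.
Qed.

Lemma inN_opp m : inN S alpha m -> inN S alpha (- m).
Proof.
  unfold inN, comparable. intros H.
  assert (c : comparable1 S J m) by (intros t Ht; specialize (H t Ht); inversion H; auto).
  apply (comparable_Ialpha_opp S hS alpha halpha) in c. intros t Ht. constructor; auto.
Qed.

Lemma closest_return_opp n : closest_return S alpha n -> closest_return S alpha (- n).
Proof.
  unfold closest_return. rewrite Z.opp_involutive, Z.abs_opp.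
  intros [HN [[H1 H2]|[H1 H2]]]; split; try (apply inN_opp; auto).
  - right. split; auto. intros [k [Hk [k0 [hk Hl]]]]. apply H2.
    exists (- k)%Z. split; [apply inN_opp; auto|split; [lia|split; [lia|]]].
    assert (H4 : lhd S ((- n)%Z :: k :: 0%Z :: n :: nil) J) by (apply lhd4_of_abc_acd; auto).
    rewrite <- (Z.opp_involutive k), <- lhd4_reflect in H4.
    apply (lhd4_bcd S hS _ _ _ _ _ H4).
  - left. split; auto. intros [k [Hk [k0 [hk Hl]]]]. apply H2.
    exists (- k)%Z. split; [apply inN_opp; auto|split; [lia|split; [lia|]]].
    assert (H4 : lhd S (n :: 0%Z :: k :: (- n)%Z :: nil) J) by (apply lhd4_of_abd_bcd; auto).
    rewrite <- (Z.opp_involutive n) in H4 at 1. rewrite lhd4_reflect, Z.opp_involutive in H4.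
    apply (lhd4_abc S hS _ _ _ _ _ H4).
Qed.

End ClosestReturns.

Theorem mainTheorem7 (S : setting) (hS : standing S) (n k : Z) (alpha : R)
  (halpha : 0 < alpha <= 1) :
  (lhd S ((- n)%Z :: 0%Z :: k :: n :: nil) (Ialpha S alpha) <->
   lhd S ((- n)%Z :: (- k)%Z :: 0%Z :: n :: nil) (Ialpha S alpha)) /\
  (closest_return S alpha n -> closest_return S alpha (- n)).
Proof.
  split.
  - apply lhd4_reflect; auto.
  - apply closest_return_opp; auto.
Qed.
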